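(* Assume there is a linear operator $\mathfrak{R}:V\to W'$ and constants $\alpha_*>0$, $M^*>0$ with $$\inf_{w\in W,\,w\ne0}\ \sup_{v\in V,\,v\neq0}\frac{\langle\mathfrak{R}v,w\rangle}{\|w\|_W\|v\|_V}\ge\alpha_*,\qquad\|\mathfrak{R}v\|_{W'}\le M^*\|v\|_V\ \ \forall v\in V,$$ and that there is $\kappa>0$ with $$\kappa\|w\|_W\le\sup_{v_\eta\in V_\eta,\ v_\eta\neq0}\frac{\mathcal{A}(w,v_\eta)}{\|v_\eta\|_V}\quad\text{for all } w\in W_\theta\cup S_\theta.$$ Let $u^*_\theta\in\mathrm{cl}^{seq}_w(W_\theta)$ be the weak limit in $W$ of a minimizing sequence $(\tilde w^n_\theta)\subset W_\theta$, i.e. $\lim_n\|u-\tilde w^n_\theta\|_{op,\eta}=\inf_{w_\theta\in W_\theta}\|u-w_\theta\|_{op,\eta}$. Then $$\|u-u^*_\theta\|_W\le\Big(1+2\frac{M^*}{\alpha_*}\frac{M}{\kappa}\Big)\inf_{w_\theta\in W_\theta}\|u-w_\theta\|_W.$$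
   Context: $W$ and $V$ are reflexive separable real Banach spaces, $W'$ the dual of $W$ with duality pairing $\langle\cdot,\cdot\rangle$. $\mathcal{A}:W\times V\to\mathbb{R}$ is a bilinear form with $\mathcal{A}(w,v)\le M\|w\|_W\|v\|_V$, $\mathcal{F}:V\to\mathbb{R}$ is bounded linear, and $u\in W$ is the unique solution of $\mathcal{A}(u,v)=\mathcal{F}(v)$ for all $v\in V$. $W_\theta\subseteq W$ and $V_\eta\subseteq V$ are arbitrary subsets, $V_\eta$ containing an element of nonzero norm. For $w\in W$, $\|w\|_{op,\eta}:=\sup_{v_\eta\in V_\eta,\ \|v_\eta\|_V\neq0}\mathcal{A}(w,v_\eta)/\|v_\eta\|_V$. $S_\theta:=\{w_1-w_2:\ w_1,w_2\in W_\theta\}$. $\mathrm{cl}^{seq}_w(W_\theta)$ is the set of all weak limits in $W$ of sequences in $W_\theta$. *)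

From HB Require Import structures.
From mathcomp Require Import all_boot all_order all_algebra.
From mathcomp Require Import all_classical all_reals all_analysis.
Set Implicit Arguments. Unset Strict Implicit. Unset Printing Implicit Defensive.
Import Order.TTheory GRing.Theory Num.Theory.
Import numFieldNormedType.Exports.
Local Open Scope classical_set_scope.
Local Open Scope ring_scope.

Definition is_dual_elt (R : realType) (W : normedModType R) (f : W -> R) : Prop :=
  (forall (a : R) (x y : W), f (a *: x + y) = a * f x + f y) /\ continuous f.

(* a bounded linear functional on W' (element of the bidual W'') ;
   boundedness w.r.t. the dual norm ||f||_{W'} = sup |f w| / ||w||. *)
Definition is_bidual_elt (R : realType) (W : normedModType R)
  (Phi : (W -> R) -> R) : Prop :=
  (forall (a : R) (f g : W -> R), is_dual_elt f -> is_dual_elt g ->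
      Phi (fun x => a * f x + g x) = a * Phi f + Phi g) /\
  (exists C : R, forall (f : W -> R) (K : R), is_dual_elt f ->
      (forall w : W, `|f w| <= K * `|w|) -> `|Phi f| <= C * K).

Definition reflexive_space (R : realType) (W : normedModType R) : Prop :=
  forall Phi : (W -> R) -> R, is_bidual_elt Phi ->
    exists w : W, forall f : W -> R, is_dual_elt f -> Phi f = f w.

Definition separable_space (R : realType) (W : normedModType R) : Prop :=
  exists D : set W, countable D /\ closure D = setT.

Definition weak_cvg (R : realType) (W : normedModType R) (s : nat -> W) (l : W) : Prop :=
  forall f : W -> R, is_dual_elt f -> (fun n => f (s n)) @ \oo --> f l.

Definition seq_weak_closure (R : realType) (W : normedModType R) (Wt : set W) : set W :=
  [set l | exists s : nat -> W, (forall n, Wt (s n)) /\ weak_cvg s l].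

Definition diff_set (R : realType) (W : normedModType R) (Wt : set W) : set W :=
  [set w | exists w1 w2, Wt w1 /\ Wt w2 /\ w = w1 - w2].

Definition opnorm_eta (R : realType) (W V : normedModType R)
  (A : W -> V -> R) (Veta : set V) (w : W) : \bar R :=
  ereal_sup [set (A w v / `|v|)%:E | v in [set v | Veta v /\ `|v| != 0]].

From mathcomp Require Import ring lra.
From HB Require Import structures.
From mathcomp Require Import all_boot all_order all_algebra.
From mathcomp Require Import all_classical all_reals all_analysis.
Import Order.TTheory GRing.Theory Num.Theory.
Import numFieldNormedType.Exports.
Local Open Scope classical_set_scope.
Local Open Scope ring_scope.

(* Fix a competitor w in W_theta and write B := 2 M ||u - w|| / kappa.
   1. Since ||.||_{op,eta} <= M ||.|| and the op-norm is M-Lipschitz in its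
      argument, the minimizing property of (w_n) together with the
      kappa-stability on S_theta gives ||w - w_n|| <= B + e eventually, for
      every e > 0 (minimizing_seq_near).
   2. Each pairing <R v, .> is a bounded linear functional on W, so
      w - w_n converges weakly to w - u*; the bound on R and the inf-sup
      condition then transfer the eventual bound to the weak limit, up to
      the factor M*/alpha: ||w - u*|| <= (M*/alpha) B (weak_limit_norm_le).
   3. The triangle inequality gives ||u - u*|| <= c ||u - w|| with
      c = 1 + 2 (M*/alpha)(M/kappa); taking the infimum over w yields the
      theorem (le_mul_ereal_inf).
   When M < 0 the space W is trivial (neg_bound_trivial) and the claim reads
   0 <= c * 0. *)

Lemma lin_bdd_cont (R : realType) (W : normedModType R) (f : W -> R) (K : R) :
  (forall (a : R) (x y : W), f (a *: x + y) = a * f x + f y) ->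
  (forall x, `|f x| <= K * `|x|) -> continuous f.
Proof.
move=> hl hb x; apply/cvgrPdist_le => e e0.
have K1 : 0 < `|K| + 1 by rewrite ltr_wpDl.
have e_K : 0 < e / (`|K| + 1) by rewrite divr_gt0.
near=> y.
have -> : f x - f y = f (x - y).
  have -> : x - y = (-1) *: y + x by rewrite scaleN1r addrC.
  by rewrite hl mulN1r addrC.
apply: (le_trans (hb _)).
have hxy : `|x - y| <= e / (`|K| + 1).
  near: y; exact: (@cvgr_dist_le _ _ _ (nbhs x) _ id x cvg_id).
apply: (le_trans (ler_wpM2r (normr_ge0 _) (ler_norm K))).
apply: (@le_trans _ _ ((`|K| + 1) * `|x - y|)); first by rewrite ler_wpM2r // lerDl.
by rewrite mulrC -ler_pdivlMr.
Unshelve. all: by end_near. Qed.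

Lemma weak_cvg_subl {R : realType} {W : normedModType R} {s : nat -> W} {l : W} (w : W) :
  weak_cvg s l -> weak_cvg (fun n => w - s n) (w - l).
Proof.
move=> hs f fW'; have [hf _] := fW'.
have fB x : f (w - x) = f w - f x.
  by rewrite -scaleN1r addrC hf mulN1r addrC.
rewrite fB (_ : (fun n => f (w - s n)) = (fun n => f w - f (s n))); last first.
  by apply: funext => n; rewrite fB.
by apply: cvgB; [exact: cvg_cst | exact: hs].
Qed.

Lemma le_mul_ereal_inf (R : realType) (T : Type) (S : set T) (f : T -> R) (x c : R) :
  0 < c -> (forall t, S t -> x <= c * f t) ->
  (x%:E <= c%:E * ereal_inf [set (f t)%:E | t in S])%E.
Proof.
move=> c0 hS.
have hI : ((x / c)%:E <= ereal_inf [set (f t)%:E | t in S])%E.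
  apply: le_ereal_inf_tmp => _ [t St <-].
  by rewrite lee_fin ler_pdivrMr // mulrC; exact: hS.
have := lee_wpmul2l (x := c%:E) _ hI.
by rewrite -EFinM mulrC divfK ?gt_eqF //; apply; rewrite lee_fin ltW.
Qed.

(* A form bounded above by M ||w|| ||v|| with M < 0 on a nontrivial V can
   only live on the zero space: testing with v and -v gives 0 <= M ||w|| ||v||. *)
Lemma neg_bound_trivial {R : realType} {W V : normedModType R} {A : W -> V -> R} {M : R} :
  (forall (a : R) (w : W) (v1 v2 : V), A w (a *: v1 + v2) = a * A w v1 + A w v2) ->
  (forall (w : W) (v : V), A w v <= M * `|w| * `|v|) ->
  (exists v : V, `|v| != 0) -> M < 0 -> forall w : W, w = 0.
Proof.
move=> hAr hAb [v nv] M_neg w.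
have vp : 0 < `|v| by rewrite lt0r nv normr_ge0.
have A0 : A w 0 = 0 by have := hAr 1 w 0 0; rewrite scale1r addr0 mul1r; lra.
have A_opp : A w (- v) = - A w v.
  by have := hAr (-1) w v 0; rewrite scaleN1r addr0 A0 addr0 mulN1r.
have := hAb w v; have := hAb w (- v); rewrite A_opp normrN => h1 h2.
have : 0 <= M * `|w| * `|v| by lra.
rewrite pmulr_lge0 // nmulr_rge0 // normr_le0 => /eqP; exact.
Qed.

Section OpNormEta.
Context {R : realType} {W V : normedModType R}.
Context {A : W -> V -> R} {M : R} {Veta : set V}.
Hypothesis hAl : forall (a : R) (w1 w2 : W) (v : V), A (a *: w1 + w2) v = a * A w1 v + A w2 v.
Hypothesis hAb : forall (w : W) (v : V), A w v <= M * `|w| * `|v|.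

Lemma opnorm_eta_le (x : W) : (opnorm_eta A Veta x <= (M * `|x|)%:E)%E.
Proof.
apply: ge_ereal_sup => _ [v [_ nv] <-].
by rewrite lee_fin ler_pdivrMr // lt0r nv normr_ge0.
Qed.

Lemma opnorm_eta_addr (x y : W) :
  (opnorm_eta A Veta (x + y)%R <= opnorm_eta A Veta x + (M * `|y|)%:E)%E.
Proof.
apply: ge_ereal_sup => _ [v [Vv nv] <-].
have vp : 0 < `|v| by rewrite lt0r nv normr_ge0.
have -> : A (x + y) v = A x v + A y v by rewrite -[A x v]mul1r -hAl scale1r.
rewrite mulrDl EFinD; apply: leeD; first by apply: ereal_sup_ubound; exists v.
by rewrite lee_fin ler_pdivrMr.
Qed.

Context {Wtheta : set W} {u : W} {kappa : R} {wn : nat -> W}.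
Hypothesis hkappa : 0 < kappa.
Hypothesis hkap : forall w : W, (Wtheta w \/ diff_set Wtheta w) ->
  ((kappa * `|w|)%:E <= opnorm_eta A Veta w)%E.
Hypothesis hwn : forall n, Wtheta (wn n).
Hypothesis hmin : (fun n => opnorm_eta A Veta (u - wn n)) @ \oo -->
  ereal_inf [set opnorm_eta A Veta (u - w) | w in Wtheta].

Lemma minimizing_seq_near {w : W} : Wtheta w -> forall e, 0 < e ->
  \forall n \near \oo, `|w - wn n| <= 2 * M * `|u - w| / kappa + e.
Proof.
move=> Ww e e0.
set c := (M * `|u - w| + e * kappa)%:E.
have inf_lt : (ereal_inf [set opnorm_eta A Veta (u - w')%R | w' in Wtheta] < c)%E.
  apply: (@le_lt_trans _ _ (opnorm_eta A Veta (u - w)%R)).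
    by apply: ereal_inf_lbound; exists w.
  by apply: (le_lt_trans (opnorm_eta_le _)); rewrite lte_fin ltrDl mulr_gt0.
near=> n.
have opn_lt : (opnorm_eta A Veta (u - wn n)%R < c)%E.
  near: n; exact: (hmin (fun x => (x < c)%E) (open_ereal_lt' inf_lt)).
have split_w : w - wn n = (u - wn n) + (w - u).
  by rewrite [RHS]addrC addrA subrK.
have stab : ((kappa * `|w - wn n|)%:E <=
             opnorm_eta A Veta ((u - wn n) + (w - u))%R)%E.
  by rewrite -split_w; apply: hkap; right; exists w, (wn n).
have bound := le_trans stab (le_trans (opnorm_eta_addr _ _) (leeD (ltW opn_lt) (lexx _))).
rewrite -EFinD lee_fin (distrC w u) -ler_pdivlMl // in bound.
have -> : 2 * M * `|u - w| / kappa + e =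
          kappa^-1 * (M * `|u - w| + e * kappa + M * `|u - w|) by field; rewrite gt_eqF.
exact: bound.
Unshelve. all: by end_near. Qed.

End OpNormEta.

Section InfSup.
Context {R : realType} {W V : normedModType R} {r : V -> W -> R}.
Context {alpha Mstar : R}.
Hypothesis hrr : forall (a : R) (v : V) (w1 w2 : W), r v (a *: w1 + w2) = a * r v w1 + r v w2.
Hypothesis hrbound : forall (v : V) (w : W), `|r v w| <= Mstar * `|v| * `|w|.
Hypothesis halpha : 0 < alpha.
Hypothesis hMstar : 0 < Mstar.
Hypothesis hinfsup : (alpha%:E <= ereal_inf
  [set ereal_sup [set (r v w / (`|w| * `|v|))%:E | v in [set v : V | v != 0%R]]
   | w in [set w : W | w != 0%R]])%E.

Lemma pairing_dual (v : V) : is_dual_elt (r v).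
Proof.
have r_lin : forall (a : R) (x y : W), r v (a *: x + y) = a * r v x + r v y.
  by move=> a x y; exact: hrr.
split; first exact: r_lin.
by apply: (@lin_bdd_cont _ _ _ (Mstar * `|v|) r_lin) => x; exact: hrbound.
Qed.

Lemma inf_sup_bound (x : W) (B : R) : x != 0 ->
  (forall v : V, v != 0 -> r v x <= B * `|v|) -> alpha * `|x| <= B.
Proof.
move=> nx hB; have xp : 0 < `|x| by rewrite normr_gt0.
rewrite -ler_pdivlMr // -lee_fin.
apply: (le_trans hinfsup); apply: ge_ereal_inf.
exists (ereal_sup [set (r v x / (`|x| * `|v|))%:E | v in [set v : V | v != 0]]).
  by exists x.
apply: ge_ereal_sup => _ [v nv <-].
have vp : 0 < `|v| by rewrite normr_gt0.
rewrite lee_fin ler_pdivrMr ?mulr_gt0 // mulrA divfK ?gt_eqF //.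
exact: hB.
Qed.

Lemma weak_limit_norm_le {s : nat -> W} {l : W} {b : R} :
  weak_cvg s l -> (forall e, 0 < e -> \forall n \near \oo, `|s n| <= b + e) ->
  `|l| <= Mstar / alpha * b.
Proof.
move=> hs hb; apply/ler_addgt0Pr => e e0.
set e' := e * alpha / Mstar.
have e'0 : 0 < e' by rewrite divr_gt0 ?mulr_gt0.
have -> : Mstar / alpha * b + e = Mstar * (b + e') / alpha.
  by rewrite /e'; field; rewrite !gt_eqF.
rewrite ler_pdivlMr // mulrC.
have [l0|nl] := eqVneq l 0.
  have [n hn] := filter_ex (hb _ e'0).
  by rewrite l0 normr0 mulr0 mulr_ge0 ?(ltW hMstar) // (le_trans _ hn).
apply: inf_sup_bound => // v nv.
have hlim := hs _ (pairing_dual v).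
apply: (cvgr_to_le hlim); apply: filterS (hb _ e'0) => n hn.
apply: (le_trans (ler_norm _)); apply: (le_trans (hrbound _ _)).
by rewrite [X in _ <= X]mulrAC ler_wpM2l // mulr_ge0 ?(ltW hMstar).
Qed.

End InfSup.

Theorem lemma3 (R : realType) (W V : completeNormedModType R)
  (hWrefl : reflexive_space W) (hVrefl : reflexive_space V)
  (hWsep : separable_space W) (hVsep : separable_space V)
  (A : W -> V -> R) (M : R)
  (hAl : forall (a : R) (w1 w2 : W) (v : V), A (a *: w1 + w2) v = a * A w1 v + A w2 v)
  (hAr : forall (a : R) (w : W) (v1 v2 : V), A w (a *: v1 + v2) = a * A w v1 + A w v2)
  (hAb : forall (w : W) (v : V), A w v <= M * `|w| * `|v|)
  (F : V -> R)
  (hFl : forall (a : R) (v1 v2 : V), F (a *: v1 + v2) = a * F v1 + F v2)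
  (hFb : exists C : R, forall v : V, `|F v| <= C * `|v|)
  (u : W) (hu : forall v : V, A u v = F v)
  (hu_uniq : forall w : W, (forall v : V, A w v = F v) -> w = u)
  (Wtheta : set W) (Veta : set V)
  (hVeta : exists v : V, Veta v /\ `|v| != 0)
  (* the operator frakR : V -> W', given through its pairing <frakR v, w> = r v w *)
  (r : V -> W -> R)
  (hrl : forall (a : R) (v1 v2 : V) (w : W), r (a *: v1 + v2) w = a * r v1 w + r v2 w)
  (hrr : forall (a : R) (v : V) (w1 w2 : W), r v (a *: w1 + w2) = a * r v w1 + r v w2)
  (alpha Mstar kappa : R) (halpha : 0 < alpha) (hMstar : 0 < Mstar) (hkappa : 0 < kappa)
  (hinfsup : (alpha%:E <= ereal_inf
       [set ereal_sup [set (r v w / (`|w| * `|v|))%:E | v in [set v : V | v != 0%R]]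
        | w in [set w : W | w != 0%R]])%E)
  (hrbound : forall (v : V) (w : W), `|r v w| <= Mstar * `|v| * `|w|)
  (hkap : forall w : W, (Wtheta w \/ diff_set Wtheta w) ->
       ((kappa * `|w|)%:E <= opnorm_eta A Veta w)%E)
  (wn : nat -> W) (hwn : forall n, Wtheta (wn n))
  (hmin : (fun n => opnorm_eta A Veta (u - wn n)) @ \oo -->
          ereal_inf [set opnorm_eta A Veta (u - w) | w in Wtheta])
  (ustar : W) (hustar : weak_cvg wn ustar) :
  ((`|u - ustar|)%:E <=
     (1 + 2 * (Mstar / alpha) * (M / kappa))%:E *
     ereal_inf [set (`|u - w|)%:E | w in Wtheta])%E.
Proof.
have [M_neg | M_ge0] := ltP M 0.
  have [v0 [_ nv0]] := hVeta.
  have W0 := neg_bound_trivial hAr hAb (ex_intro _ v0 nv0) M_neg.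
  have inf0 : ereal_inf [set (`|u - w|)%:E | w in Wtheta] = 0%E.
    apply/eqP; rewrite eq_le; apply/andP; split.
      by apply: ereal_inf_lbound; exists (wn 0%N) => //; rewrite (W0 (u - wn 0%N)) normr0.
    by apply: le_ereal_inf_tmp => _ [w _ <-]; rewrite lee_fin normr_ge0.
  by rewrite inf0 mule0 (W0 (u - ustar)) normr0.
apply: le_mul_ereal_inf => [|w Ww].
  by rewrite ltr_wpDr // !mulr_ge0 ?invr_ge0 ?(ltW halpha) ?(ltW hMstar) ?(ltW hkappa).
have near_w := minimizing_seq_near hAl hAb hkappa hkap hwn hmin Ww.
have dist_limit : `|w - ustar| <= Mstar / alpha * (2 * M * `|u - w| / kappa).
  apply: (weak_limit_norm_le hrr hrbound halpha hMstar hinfsup (weak_cvg_subl w hustar)).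
  exact: near_w.
have -> : u - ustar = (u - w) + (w - ustar) by rewrite addrA subrK.
apply: (le_trans (ler_normD _ _)).
rewrite mulrDl mul1r lerD2l.
have -> : 2 * (Mstar / alpha) * (M / kappa) * `|u - w| =
          Mstar / alpha * (2 * M * `|u - w| / kappa) by field; rewrite !gt_eqF.
exact: dist_limit.
Qed.
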